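(* Let $\alpha,\beta>-1$ and $n\ge 0$. For $z\in\mathcal{E}_\rho$, i.e. $z=\tfrac12(u+u^{-1})$ with $|u|=\rho\ge 1$, $$P_n^{(\alpha,\beta)}(z)=\sum_{k=-n}^{n} d_{|k|,n}\,u^k,$$ where for $0\le k\le n$ $$d_{k,n}=\frac{(n+\alpha+\beta+1)_k\,(k+\alpha+1)_{n-k}}{(n-k)!\,2^{2k}\,\Gamma(k+1)}\;{}_3F_2\!\left[\begin{matrix}k-n,\ n+k+\alpha+\beta+1,\ k+\tfrac12\\ k+\alpha+1,\ 2k+1\end{matrix};1\right].$$
   Context: $P_n^{(\alpha,\beta)}$ is the Jacobi polynomial $P_n^{(\alpha,\beta)}(x)=2^{-n}\sum_{k=0}^n\binom{n+\alpha}{n-k}\binom{n+\beta}{k}(x-1)^k(x+1)^{n-k}$, $\alpha,\beta>-1$. The Bernstein ellipse is $\mathcal{E}_\rho=\{\tfrac12(u+u^{-1}): u=\rho e^{i\theta},\ 0\le\theta<2\pi\}$, $\rho\ge1$. $(a)_0=1$, $(a)_k=a(a+1)\cdots(a+k-1)$ is the Pochhammer symbol, and ${}_3F_2\left[\begin{matrix}a_1,a_2,a_3\\ b_1,b_2\end{matrix};x\right]=\sum_{j\ge0}\frac{(a_1)_j(a_2)_j(a_3)_j}{(b_1)_j(b_2)_j}\frac{x^j}{j!}$ (a terminating sum here since $k-n\le 0$). *)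

(* Complex numbers are modelled by an arbitrary
   numClosedFieldType C (the algebraically closed, partially ordered field
   with norm; the complex numbers are the intended instance). *)
From HB Require Import structures.
From mathcomp Require Import all_boot all_order all_algebra.
Set Implicit Arguments. Unset Strict Implicit. Unset Printing Implicit Defensive.
Import Order.TTheory GRing.Theory Num.Theory.
Local Open Scope ring_scope.

Section Defs.
Variable C : numClosedFieldType.

Definition pochhammer (a : C) (k : nat) : C := \prod_(i < k) (a + i%:R).

Definition gbinom (a : C) (m : nat) : C :=
  (\prod_(i < m) (a - i%:R)) / (m`!)%:R.

Definition jacobiP (n : nat) (alpha beta x : C) : C :=
  (2 ^+ n)^-1 * \sum_(k < n.+1)
     gbinom (n%:R + alpha) (n - k) * gbinom (n%:R + beta) k
       * (x - 1) ^+ k * (x + 1) ^+ (n - k).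

(* Generalized hypergeometric 3F2 summed over j = 0..m.  When a1 = -m is a
   non-positive integer this is exactly the (terminating) series, since
   (a1)_j = 0 for j > m. *)
Definition hyp3F2_trunc (m : nat) (a1 a2 a3 b1 b2 x : C) : C :=
  \sum_(j < m.+1)
    pochhammer a1 j * pochhammer a2 j * pochhammer a3 j
      / (pochhammer b1 j * pochhammer b2 j) * x ^+ j / (j`!)%:R.

(* The coefficient d_{k,n}; Gamma(k+1) = k!. *)
Definition dcoef (alpha beta : C) (k n : nat) : C :=
  pochhammer (n%:R + alpha + beta + 1) k * pochhammer (k%:R + alpha + 1) (n - k)
    / ((n - k)`!%:R * 2 ^+ (2 * k) * (k`!)%:R)
  * hyp3F2_trunc (n - k) (k%:R - n%:R) (n%:R + k%:R + alpha + beta + 1)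
        (k%:R + 2^-1) (k%:R + alpha + 1) ((2 * k)%:R + 1) 1.

Definition joukowski (u : C) : C := (u + u^-1) / 2.

End Defs.

(* Expanding (x + 1)^(n-k) = (2 + (x - 1))^(n-k) in the definition and applying
   Vandermonde's convolution gives P_n(x) = sum_j c_j (2(x - 1))^j with
   c_j = binom(n+alpha, n-j) binom(n+j+alpha+beta, j) / 4^j.  On the ellipse
   2(x - 1) = u - 2 + u^-1 = u^-1 (u - 1)^2, so (2(x - 1))^j has the coefficient
   (-1)^(j+k) C(2j, j+k) at both u^k and u^-k.  Collecting powers of u, the
   coefficient of u^(+-k) is a sum over j = k + i, and by the duplication formula
   (2k+2i)! = (2k)! 4^i (k+1)_i (k+1/2)_i its i-th term is the i-th term of the
   3F2 times the prefactor of d_{k,n}. *)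

From HB Require Import structures.
From mathcomp Require Import all_boot all_order all_algebra.
From mathcomp Require Import ring zify.
Import Order.TTheory GRing.Theory Num.Theory.
Local Open Scope ring_scope.

Section Pochhammer.
Context {C : numClosedFieldType}.
Implicit Types (a b c : C) (k i j m n p : nat).

Definition falling c m : C := \prod_(i < m) (c - i%:R).

Lemma natr_fact_neq0 m : (m`!)%:R != 0 :> C.
Proof. by rewrite pnatr_eq0 -lt0n fact_gt0. Qed.

Lemma pochhammer0 c : pochhammer c 0 = 1.
Proof. by rewrite /pochhammer big_ord0. Qed.

Lemma pochhammerD c m p :
  pochhammer c (m + p) = pochhammer c m * pochhammer (c + m%:R) p.
Proof.
rewrite /pochhammer big_split_ord /=; congr (_ * _).
by apply: eq_bigr => i _; rewrite natrD addrA.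
Qed.

Lemma pochhammerSr c m : pochhammer c m.+1 = pochhammer c m * (c + m%:R).
Proof. by rewrite -addn1 pochhammerD /pochhammer big_ord1 addr0. Qed.

Lemma fallingD c m p : falling c (m + p) = falling c m * falling (c - m%:R) p.
Proof.
rewrite /falling big_split_ord /=; congr (_ * _).
by apply: eq_bigr => i _; rewrite natrD opprD addrA.
Qed.

Lemma fallingS c m : falling c m.+1 = c * falling (c - 1) m.
Proof. by rewrite -add1n fallingD /falling big_ord1 subr0. Qed.

Lemma fallingSr c m : falling c m.+1 = falling c m * (c - m%:R).
Proof. by rewrite -addn1 fallingD /falling big_ord1 subr0. Qed.

Lemma falling_pochhammer c m : falling (c + m%:R) m = pochhammer (c + 1) m.
Proof.
elim: m c => [|m IHm] c; first by rewrite /falling big_ord0 pochhammer0.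
rewrite fallingS pochhammerSr -IHm mulrC -addn1 natrD addrA addrK.
by congr (_ * _); rewrite addrAC.
Qed.

Lemma pochhammerN c i : pochhammer (- c) i = (-1) ^+ i * falling c i.
Proof.
elim: i => [|i IHi]; first by rewrite pochhammer0 /falling big_ord0 mulr1.
by rewrite pochhammerSr fallingSr IHi exprS; ring.
Qed.

Lemma fact_addn_pochhammer m i :
  ((m + i)`!)%:R = pochhammer (m%:R + 1) i * (m`!)%:R :> C.
Proof.
elim: i => [|i IHi]; first by rewrite addn0 pochhammer0 mul1r.
by rewrite addnS factS natrM IHi pochhammerSr -addn1 !natrD; ring.
Qed.

Lemma pochhammerN_natr m i : (i <= m)%N ->
  pochhammer (- m%:R) i * ((m - i)`!)%:R = (-1) ^+ i * (m`!)%:R :> C.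
Proof.
move=> /subnKC <-; rewrite addKn pochhammerN addnC natrD falling_pochhammer.
by rewrite -mulrA -fact_addn_pochhammer.
Qed.

Lemma pochhammer_neq0 c i : 0 < c -> pochhammer c i != 0.
Proof.
move=> c_gt0; apply/prodf_neq0 => l _; apply: lt0r_neq0.
by rewrite ltr_wpDr ?ler0n.
Qed.

Lemma pochhammer_natrS_neq0 m i : pochhammer (m%:R + 1) i != 0 :> C.
Proof. by rewrite pochhammer_neq0 // natr1 ltr0Sn. Qed.

Lemma fact_double_pochhammer k i :
  ((2 * (k + i))`!)%:R = ((2 * k)`!)%:R * 2 ^+ (2 * i)
                         * pochhammer (k%:R + 1) i * pochhammer (k%:R + 2^-1) i :> C.
Proof.
have two_neq0 : (2 : C) != 0 by rewrite pnatr_eq0.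
elim: i => [|i IHi]; first by rewrite addn0 !pochhammer0 !mulr1.
have -> : (2 * (k + i.+1) = (2 * (k + i)).+2)%N by lia.
rewrite !factS !natrM IHi !pochhammerSr mulnS !exprS.
rewrite -[(_ * _).+2]addn2 -[(_ * _).+1]addn1 !natrD.
by field.
Qed.

Lemma gbinom0 c : gbinom c 0 = 1.
Proof. by rewrite /gbinom big_ord0 fact0 divr1. Qed.

Lemma gbinomS c j : (j.+1)%:R * gbinom c j.+1 = (c - j%:R) * gbinom c j.
Proof.
rewrite /gbinom -/(falling c j.+1) -/(falling c j) fallingSr factS natrM.
by field; rewrite natr_fact_neq0 addrC natr1 pnatr_eq0.
Qed.

Lemma gbinom_pochhammer c m :
  gbinom (c + m%:R) m = pochhammer (c + 1) m / (m`!)%:R.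
Proof. by rewrite /gbinom -/(falling _ m) falling_pochhammer. Qed.

Lemma gbinom_mul_binom c m p :
  gbinom c (m + p) * ('C(m + p, p))%:R = gbinom c m * gbinom (c - m%:R) p.
Proof.
have binE : ('C(m + p, p))%:R = (m + p)`!%:R / (p`!%:R * m`!%:R) :> C.
  by rewrite -(bin_fact (leq_addl m p)) addnK !natrM; field; rewrite !natr_fact_neq0.
by rewrite binE /gbinom -!/(falling _ _) fallingD; field; rewrite !natr_fact_neq0.
Qed.

Lemma gbinom_vandermonde a b j :
  \sum_(0 <= k < j.+1) gbinom a (j - k) * gbinom b k = gbinom (a + b) j.
Proof.
elim: j => [|j IHj]; first by rewrite big_nat1 !gbinom0 mulr1.
apply: (mulfI (_ : j.+1%:R != 0 :> C)); first by rewrite pnatr_eq0.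
rewrite gbinomS -IHj !mulr_sumr.
transitivity (\sum_(0 <= k < j.+2) ((j.+1 - k)%:R * gbinom a (j.+1 - k)) * gbinom b k
  + \sum_(0 <= k < j.+2) gbinom a (j.+1 - k) * (k%:R * gbinom b k)).
  rewrite -big_split; apply: eq_big_nat => k /andP[_ ltkj] /=.
  by rewrite natrB; [ring | rewrite -ltnS].
rewrite big_nat_recr // subnn !mul0r /= addr0.
rewrite [X in _ + X = _]big_nat_recl // mul0r mulr0 /= add0r -big_split.
apply: eq_big_nat => k /andP[_ ltkj] /=.
by rewrite subSS subSn // !gbinomS natrB; [ring | rewrite -ltnS].
Qed.

End Pochhammer.

Lemma sum_triangle_antidiagonal (V : nmodType) (F : nat -> nat -> V) N :
  \sum_(0 <= k < N.+1) \sum_(0 <= i < (N - k).+1) F k i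
  = \sum_(0 <= j < N.+1) \sum_(0 <= k < j.+1) F k (j - k)%N.
Proof.
elim: N => [|N IHN]; first by rewrite !big_nat1.
rewrite big_nat_recr //= subnn big_nat1 [in RHS]big_nat_recr //=.
transitivity (\sum_(0 <= k < N.+1)
   (\sum_(0 <= i < (N - k).+1) F k i + F k (N.+1 - k)%N) + F N.+1 0%N).
  congr (_ + _); apply: eq_big_nat => k /andP[_ ltkN].
  by rewrite subSn // big_nat_recr.
rewrite big_split /= IHN -addrA; congr (_ + _).
by rewrite [RHS]big_nat_recr //= subnn.
Qed.

Section Jacobi.
Context {C : numClosedFieldType}.
Implicit Types (a b x : C) (k j n : nat).

Lemma gbinom_convolution a b n j : (j <= n)%N ->
  \sum_(0 <= k < j.+1)
     gbinom (n%:R + a) (n - k) * gbinom (n%:R + b) k * ('C(n - k, j - k))%:R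
  = gbinom (n%:R + a) (n - j) * gbinom (n%:R + j%:R + a + b) j.
Proof.
move=> lejn; transitivity (\sum_(0 <= k < j.+1) gbinom (n%:R + a) (n - j) *
                 (gbinom (j%:R + a) (j - k) * gbinom (n%:R + b) k)).
  apply: eq_big_nat => k /andP[_ ltkj].
  have -> : (n - k = (n - j) + (j - k))%N by lia.
  rewrite mulrAC gbinom_mul_binom natrB //.
  have -> : n%:R + a - (n%:R - j%:R) = j%:R + a by ring.
  by rewrite mulrA.
rewrite -mulr_sumr gbinom_vandermonde; congr (_ * gbinom _ _); ring.
Qed.

Definition jacobi_coef a b n j : C :=
  gbinom (n%:R + a) (n - j) * gbinom (n%:R + j%:R + a + b) j / 2 ^+ (2 * j).

Lemma jacobiP_expansion a b n x :
  jacobiP n a b x = \sum_(0 <= j < n.+1) jacobi_coef a b n j * (2 * (x - 1)) ^+ j.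
Proof.
have two_neq0 : (2 : C) != 0 by rewrite pnatr_eq0.
rewrite /jacobiP; have -> : x + 1 = 2 + (x - 1) by ring.
set y := x - 1; pose g k := gbinom (n%:R + a) (n - k) * gbinom (n%:R + b) k.
rewrite -(big_mkord xpredT (fun k => g k * y ^+ k * (2 + y) ^+ (n - k))).
transitivity (\sum_(0 <= k < n.+1) \sum_(0 <= i < (n - k).+1)
   (g k * ('C(n - k, i))%:R / 2 ^+ n * 2 ^+ (n - k - i) * y ^+ (k + i))).
  rewrite mulr_sumr; apply: eq_big_nat => k _.
  rewrite [(2 + y) ^+ _]exprDn.
  rewrite -(big_mkord xpredT (fun i => 2 ^+ (n - k - i) * y ^+ i *+ 'C(n - k, i))).
  rewrite !mulr_sumr; apply: eq_big_nat => i _.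
  by rewrite -mulr_natr exprD; ring.
rewrite sum_triangle_antidiagonal; apply: eq_big_nat => j /andP[_ ltjn].
have lejn : (j <= n)%N by rewrite -ltnS.
transitivity (\sum_(0 <= k < j.+1) g k * ('C(n - k, j - k))%:R
              * (2 ^+ (n - j) / 2 ^+ n * y ^+ j)).
  apply: eq_big_nat => k /andP[_ ltkj].
  have -> : (k + (j - k) = j)%N by lia.
  have -> : (n - k - (j - k) = n - j)%N by lia.
  by ring.
rewrite -mulr_suml gbinom_convolution // /jacobi_coef.
rewrite -(subnKC lejn) addKn mul2n -addnn !exprD exprMn; field.
by rewrite !expf_neq0.
Qed.

End Jacobi.

Section Laurent.
Context {C : numClosedFieldType}.
Implicit Types (u : C) (d i j l n : nat).

(* The coefficient of u^d and of u^-d in (u - 2 + u^-1)^j = u^-j (u - 1)^(2j). *)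
Definition laurent_binom j d : C := (-1) ^+ (j + d) * ('C(2 * j, j + d))%:R.

Lemma laurent_binom_gt j d : (j < d)%N -> laurent_binom j d = 0.
Proof. by move=> ltjd; rewrite /laurent_binom bin_small ?mulr0 //; lia. Qed.

Lemma laurent_binom_dist j l : (l <= 2 * j)%N ->
  laurent_binom j `|l - j| = (-1) ^+ l * ('C(2 * j, l))%:R.
Proof.
rewrite /laurent_binom; case: (leqP j l) => [lejl|ltlj] lel2j.
  by rewrite distnEl // subnKC.
rewrite distnEr ?(ltnW ltlj) // (_ : (j + (j - l) = 2 * j - l)%N); last by lia.
by rewrite bin_sub // -signr_odd oddB // oddM /= signr_odd.
Qed.

Lemma exprB1_even u j : (u - 1) ^+ (2 * j)
  = \sum_(0 <= l < (2 * j).+1) (-1) ^+ l * ('C(2 * j, l))%:R * u ^+ l.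
Proof.
rewrite -[u - 1]opprB exprNn exprM sqrrN !expr1n mul1r exprBn big_mkord.
by apply: eq_bigr => l _; rewrite expr1n mulr1 mulr_natr mulrnAl.
Qed.

Lemma laurent_binom_expansion u j n : (j <= n)%N ->
  u ^+ (n - j) * (u - 1) ^+ (2 * j)
  = \sum_(0 <= i < (2 * n).+1) laurent_binom j `|i - n| * u ^+ i.
Proof.
move=> lejn; rewrite (@big_cat_nat _ _ _ (n - j)) //=; last by lia.
rewrite (@big_cat_nat _ _ _ (n + j).+1 (n - j)) //=; [|lia|lia].
rewrite [X in _ = X + _]big_nat_cond [X in _ = X + _]big1 ?add0r; last first.
  by move=> i /andP[/andP[_ ltinj] _]; rewrite laurent_binom_gt ?mul0r //; lia.
rewrite [X in _ = _ + X]big_nat_cond [X in _ = _ + X]big1 ?addr0; last first.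
  by move=> i /andP[/andP[ltnji _] _]; rewrite laurent_binom_gt ?mul0r //; lia.
rewrite (big_addn 0 _ (n - j)) (_ : ((n + j).+1 - (n - j) = (2 * j).+1)%N); last by lia.
rewrite exprB1_even mulr_sumr; apply: eq_big_nat => l /andP[_ ltl2j].
have -> : (`|l + (n - j) - n| = `|l - j|)%N.
  by rewrite -[RHS](distnDr (n - j)) subnKC.
by rewrite laurent_binom_dist // exprD; ring.
Qed.

Lemma joukowski_sub1_expansion u j n : u != 0 -> (j <= n)%N ->
  (2 * (joukowski u - 1)) ^+ j
  = \sum_(i < (2 * n).+1) laurent_binom j `|i - n| * u ^ (i%:Z - n%:Z).
Proof.
move=> u_neq0 lejn.
have -> : 2 * (joukowski u - 1) = (u - 1) ^+ 2 / u.
  by rewrite /joukowski; field.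
have -> : ((u - 1) ^+ 2 / u) ^+ j = u ^- n * (u ^+ (n - j) * (u - 1) ^+ (2 * j)).
  rewrite expr_div_n -exprM -[in u ^+ n](subnKC lejn) [u ^+ (_ + _)]exprD.
  by field; rewrite !expf_neq0.
rewrite laurent_binom_expansion // big_mkord mulr_sumr; apply: eq_bigr => i _.
by rewrite mulrCA exprnN exprnP -expfzDr // addrC.
Qed.

End Laurent.

Section Coefficients.
Context {C : numClosedFieldType}.
Implicit Types (a b : C) (i k m n : nat).

Lemma laurent_binom_addn k i : laurent_binom (k + i) k =
  (-1) ^+ i * 2 ^+ (2 * i) * pochhammer (k%:R + 1) i * pochhammer (k%:R + 2^-1) i
  / ((i`!)%:R * pochhammer ((2 * k)%:R + 1) i) :> C.
Proof.
have lei : (i <= 2 * (k + i))%N by lia.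
have binE := congr1 (GRing.natmul (1 : C)) (bin_fact lei).
rewrite (_ : (2 * (k + i) - i = 2 * k + i)%N) in binE; last by lia.
rewrite !natrM fact_addn_pochhammer fact_double_pochhammer in binE.
rewrite /laurent_binom (_ : (k + i + k = 2 * (k + i) - i)%N); last by lia.
rewrite bin_sub // -signr_odd oddB // oddM /= signr_odd.
apply: (mulIf (_ : (i`!)%:R * pochhammer ((2 * k)%:R + 1) i * ((2 * k)`!)%:R != 0)).
  by rewrite !mulf_neq0 ?natr_fact_neq0 ?pochhammer_natrS_neq0.
by rewrite -!mulrA binE; field; rewrite natr_fact_neq0 pochhammer_natrS_neq0.
Qed.

Definition hyp3F2_term (a1 a2 a3 b1 b2 x : C) j : C :=
  pochhammer a1 j * pochhammer a2 j * pochhammer a3 j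
  / (pochhammer b1 j * pochhammer b2 j) * x ^+ j / (j`!)%:R.

Lemma jacobi_coef_mul_laurent_binom a b n k i : -1 < a -> (k + i <= n)%N ->
  jacobi_coef a b n (k + i) * laurent_binom (k + i) k =
  pochhammer (n%:R + a + b + 1) k * pochhammer (k%:R + a + 1) (n - k)
    / ((n - k)`!%:R * 2 ^+ (2 * k) * (k`!)%:R)
  * hyp3F2_term (k%:R - n%:R) (n%:R + k%:R + a + b + 1) (k%:R + 2^-1)
      (k%:R + a + 1) ((2 * k)%:R + 1) 1 i.
Proof.
move=> a_gtN1 /subnKC <-; move: (n - (k + i))%N => m; rewrite /jacobi_coef.
have ka_neq0 : pochhammer (k%:R + a + 1) i != 0.
  by rewrite pochhammer_neq0 // -addrA ltr_wpDl // -ltrBlDr sub0r.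
have -> : (k + i + m - k = i + m)%N by lia.
have -> : (k + i + m - (k + i) = m)%N by lia.
set N : C := (k + i + m)%:R.
have binom_alphaE : gbinom (N + a) m
          = pochhammer (k%:R + a + 1) (i + m) / (pochhammer (k%:R + a + 1) i * m`!%:R).
  have -> : N + a = k%:R + a + i%:R + m%:R by rewrite /N !natrD; ring.
  rewrite gbinom_pochhammer pochhammerD addrAC.
  by field; rewrite natr_fact_neq0 ka_neq0.
have binom_alpha_betaE : gbinom (N + (k + i)%:R + a + b) (k + i)
          = pochhammer (N + a + b + 1) k * pochhammer (N + k%:R + a + b + 1) i
            / (pochhammer (k%:R + 1) i * k`!%:R).
  have -> : N + (k + i)%:R + a + b = N + a + b + (k + i)%:R by ring.
  rewrite gbinom_pochhammer pochhammerD fact_addn_pochhammer.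
  have -> : N + a + b + 1 + k%:R = N + k%:R + a + b + 1 by ring.
  by field; rewrite natr_fact_neq0 pochhammer_natrS_neq0.
have pochhammer_knE : pochhammer (k%:R - N) i = (-1) ^+ i * (i + m)`!%:R / m`!%:R.
  have -> : k%:R - N = - (i + m)%:R by rewrite /N !natrD; ring.
  rewrite -(@pochhammerN_natr _ (i + m) i (leq_addr m i)) addKn.
  by field; rewrite natr_fact_neq0.
rewrite /hyp3F2_term binom_alphaE binom_alpha_betaE pochhammer_knE laurent_binom_addn mulnDr exprD expr1n.
have two_neq0 : (2 : C) != 0 by rewrite pnatr_eq0.
by field; rewrite ka_neq0 !natr_fact_neq0 !pochhammer_natrS_neq0 !expf_neq0.
Qed.

Lemma sum_jacobi_coef_mul_laurent_binom a b n k :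
  -1 < a -> (k <= n)%N ->
  \sum_(0 <= j < n.+1) jacobi_coef a b n j * laurent_binom j k = dcoef a b k n.
Proof.
move=> a_gtN1 lekn; rewrite (@big_cat_nat _ _ _ k) //=; last exact: leqW.
rewrite [X in X + _]big_nat_cond [X in X + _]big1 ?add0r; last first.
  by move=> j /andP[/andP[_ ltjk] _]; rewrite laurent_binom_gt ?mulr0.
rewrite (big_addn 0 _ k) subSn // /dcoef /hyp3F2_trunc big_mkord mulr_sumr.
by apply: eq_bigr => i _; rewrite addnC jacobi_coef_mul_laurent_binom //; have := ltn_ord i; lia.
Qed.

End Coefficients.

Theorem theorem3p1 (C : numClosedFieldType) (alpha beta : C)
  (halpha : -1 < alpha) (hbeta : -1 < beta) (n : nat)
  (rho : C) (hrho : 1 <= rho) (u : C) (hu : `|u| = rho) :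
  jacobiP n alpha beta (joukowski u) =
  \sum_(i < (2 * n).+1)
     dcoef alpha beta `|(i%:Z - n%:Z)%R|%N n * u ^ (i%:Z - n%:Z).
Proof.
have u_neq0 : u != 0 by rewrite -normr_gt0 hu (lt_le_trans ltr01).
rewrite jacobiP_expansion.
transitivity (\sum_(0 <= j < n.+1) \sum_(i < (2 * n).+1)
    jacobi_coef alpha beta n j * laurent_binom j `|i - n| * u ^ (i%:Z - n%:Z)).
  apply: eq_big_nat => j /andP[_ ltjn].
  rewrite (joukowski_sub1_expansion u j n u_neq0 ltjn) mulr_sumr.
  by apply: eq_bigr => i _; rewrite mulrA.
rewrite exchange_big; apply: eq_bigr => i _.
rewrite -mulr_suml sum_jacobi_coef_mul_laurent_binom //; have := ltn_ord i.
by case: (leqP n i) => [/distnEl -> | /ltnW/distnEr ->]; lia.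
Qed.
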